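(* Let $n\ge2$. <ul> <li>If $n\equiv1,2,3\pmod 4$, then $\Gamma^k\subseteq\mathrm{Q}$ for all $k=1,2,\dots,n-1$.</li> <li>If $n\equiv0\pmod4$, then $\Gamma^k\subseteq\mathrm{Q}$ for all odd $k$ with $1\le k\le n-1$, and $\Gamma^k\subseteq\mathrm{Q}'$ for all even $k$ with $2\le k\le n-2$.</li> </ul> In particular, $\Gamma^k\subseteq\mathrm{P}$ for $1\le k\le n-1$.
   Context: Let $\mathrm{C}$ be either the real Clifford algebra $C\ell_{p,q}$ with $p+q=n$, or the complex Clifford algebra $C\ell(\mathbb{C}^n)$. It has identity $e$ and generators $e_1,\dots,e_n$ satisfying $e_ae_b+e_be_a=2\eta_{ab}e$. In the real case $\eta=\mathrm{diag}(1,\dots,1,-1,\dots,-1)$ with $p$ entries $+1$ and $q$ entries $-1$. In the complex case $\eta=I_n$. $\mathrm{C}^k$ is the grade-$k$ subspace, spanned by the products $e_{a_1}\cdots e_{a_k}$ with $a_1<\dots<a_k$. The even subspace is $\mathrm{C}^{(0)}=\bigoplus_{k\text{ even}}\mathrm{C}^k$ and the odd subspace is $\mathrm{C}^{(1)}=\bigoplus_{k\text{ odd}}\mathrm{C}^k$. The reversion $U\mapsto\tilde U$ is the linear anti-automorphism acting on $\mathrm{C}^k$ as $(-1)^{k(k-1)/2}$. For $S\subseteq\mathrm{C}$, $S^\times$ is the set of elements of $S$ invertible in $\mathrm{C}$, and $\mathrm{C}^{\times(j)}:=(\mathrm{C}^{(j)})^\times$. $\mathrm{Z}$ is the center: $\mathrm{Z}=\mathrm{C}^0$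 for $n$ even and $\mathrm{Z}=\mathrm{C}^0\oplus\mathrm{C}^n$ for $n$ odd. Define: <ul> <li>$\Gamma^k=\{T\in\mathrm{C}^\times: T\,\mathrm{C}^k\,T^{-1}\subseteq\mathrm{C}^k\}$;</li> <li>$\mathrm{P}:=\mathrm{Z}^\times(\mathrm{C}^{\times(0)}\cup\mathrm{C}^{\times(1)})=\{WT: W\in\mathrm{Z}^\times, T\in\mathrm{C}^{\times(0)}\cup\mathrm{C}^{\times(1)}\}$;</li> <li>$\mathrm{Q}:=\{T\in\mathrm{P}:\tilde TT\in\mathrm{Z}^\times\}$;</li> <li>$\mathrm{Q}':=\{T\in\mathrm{P}:\tilde TT\in(\mathrm{C}^0\oplus\mathrm{C}^n)^\times\}$.</li> </ul> *)

From HB Require Import structures.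
From mathcomp Require Import all_boot all_order all_algebra.
From mathcomp Require Import reals complex.
Set Implicit Arguments. Unset Strict Implicit. Unset Printing Implicit Defensive.
Import Order.TTheory GRing.Theory Num.Theory.
Local Open Scope ring_scope.

(* An element is the family
   of its coordinates on the blade basis e_A = e_{a1} ... e_{ak}, a1 < ... < ak,
   indexed by subsets A of 'I_n.  (e_a e_b + e_b e_a = 2 eta_ab e with
   eta_ab = eta a if a = b, 0 otherwise.) *)
Definition cl (F : fieldType) (n : nat) := {ffun {set 'I_n} -> F}.

Section Clifford.
Variables (F : fieldType) (n : nat) (eta : 'I_n -> F).

Definition blade (A : {set 'I_n}) : cl F n := [ffun C => (C == A)%:R].

Definition clone : cl F n := blade set0.

(* e_A e_B = bsign A B * e_{A symdiff B} *)
Definition bsign (A B : {set 'I_n}) : F :=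
  (-1) ^+ #|[set ab : 'I_n * 'I_n | [&& ab.1 \in A, ab.2 \in B & (val ab.2 < val ab.1)%N]]|
  * \prod_(i in A :&: B) eta i.

Definition symdiff (A B : {set 'I_n}) := (A :\: B) :|: (B :\: A).

Definition clmul (x y : cl F n) : cl F n :=
  [ffun C => \sum_(A : {set 'I_n}) \sum_(B : {set 'I_n})
     (symdiff A B == C)%:R * (x A * y B * bsign A B)].

Definition clrev (x : cl F n) : cl F n :=
  [ffun A : {set 'I_n} => (-1) ^+ ((#|A| * (#|A| - 1)) %/ 2) * x A].

Definition in_grades (G : nat -> bool) (x : cl F n) : Prop :=
  forall A : {set 'I_n}, x A != 0 -> G #|A|.

Definition in_grade (k : nat) := in_grades (fun j => j == k).
Definition in_even := in_grades (fun j => ~~ odd j).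
Definition in_odd := in_grades (fun j => odd j).
Definition in_grade0n := in_grades (fun j => (j == 0%N) || (j == n)).
Definition in_center (x : cl F n) : Prop :=
  if odd n then in_grade0n x else in_grade 0 x.

Definition clinvertible (x : cl F n) : Prop :=
  exists y, clmul x y = clone /\ clmul y x = clone.

Definition Gamma (k : nat) (T : cl F n) : Prop :=
  exists Tinv, [/\ clmul T Tinv = clone, clmul Tinv T = clone &
    forall U, in_grade k U -> in_grade k (clmul (clmul T U) Tinv)].

Definition Pset (T : cl F n) : Prop :=
  exists W T0, [/\ in_center W, clinvertible W,
    (in_even T0 \/ in_odd T0), clinvertible T0 & T = clmul W T0].

Definition Qset (T : cl F n) : Prop :=
  Pset T /\ in_center (clmul (clrev T) T) /\ clinvertible (clmul (clrev T) T).

Definition Q'set (T : cl F n) : Prop :=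
  Pset T /\ in_grade0n (clmul (clrev T) T) /\ clinvertible (clmul (clrev T) T).

Definition theorem_claim : Prop :=
  (2 <= n)%N ->
  [/\ (n %% 4 != 0)%N ->
        forall k, (1 <= k <= n - 1)%N -> forall T, Gamma k T -> Qset T,
      (n %% 4 == 0)%N ->
        (forall k, odd k -> (1 <= k <= n - 1)%N -> forall T, Gamma k T -> Qset T)
        /\ (forall k, ~~ odd k -> (2 <= k <= n - 2)%N ->
              forall T, Gamma k T -> Q'set T)
    & forall k, (1 <= k <= n - 1)%N -> forall T, Gamma k T -> Pset T].

End Clifford.

Definition eta_pq (R : realType) (p q : nat) (i : 'I_(p + q)) : R :=
  if (i < p)%N then 1 else -1.

Definition eta_one (F : fieldType) (n : nat) (i : 'I_n) : F := 1.

(* The proof then has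
   four steps, for T in Gamma^k with even/odd parts T0, T1:
   1. splitting (T U T^-1) T = T U into parity components, T^-1 T1 and T~T
      commute with every blade of grade k;
   2. anything commuting with all blades of a fixed grade k, 1 <= k <= n-1,
      lies in C^0 (+) C^n = span(e, e_N), and in the center if k is odd;
   3. an invertible T with T^-1 T1 in span(e, e_N) lies in P: for n even T
      is homogeneous, for n odd T = W T0 with W central and invertible;
   4. reversion fixes T~T and acts by -1 on C^n when n = 2 mod 4. *)

From Pilot Require Import Defs.
From mathcomp Require Import all_boot all_order all_algebra.
From mathcomp Require Import reals complex.
From mathcomp Require Import ring zify.
Set Implicit Arguments. Unset Strict Implicit. Unset Printing Implicit Defensive.
Import GRing.Theory Num.Theory.
Local Open Scope ring_scope.

Section SymmetricDifference.
Variable n : nat.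
Local Notation sd := (@symdiff n).
Implicit Types A B C S : {set 'I_n}.

Lemma in_sd A B i : (i \in sd A B) = (i \in A) (+) (i \in B).
Proof. by rewrite /symdiff !inE; case: (i \in A); case: (i \in B). Qed.

Lemma sdK A B : sd A (sd A B) = B.
Proof. by apply/setP=> i; rewrite !in_sd; case: (i \in A); case: (i \in B). Qed.

Lemma sdKr A B : sd (sd A B) B = A.
Proof. by apply/setP=> i; rewrite !in_sd; case: (i \in A); case: (i \in B). Qed.

Lemma sdC A B : sd A B = sd B A.
Proof. by apply/setP=> i; rewrite !in_sd; case: (i \in A); case: (i \in B). Qed.

Lemma sd0 A : sd set0 A = A.
Proof. by apply/setP=> i; rewrite !in_sd inE. Qed.

Lemma sdvv A : sd A A = set0.
Proof. by apply/setP=> i; rewrite in_sd inE addbb. Qed.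

Lemma sd_eq A B C : (sd A B == C) = (B == sd A C).
Proof. by apply/eqP/eqP=> [<-|->]; rewrite sdK. Qed.

Lemma sd_inj A : injective (sd A).
Proof. by move=> B C e; rewrite -(sdK A B) e sdK. Qed.

Lemma setU1_sd (a : 'I_n) S : a \notin S -> a |: S = sd [set a] S.
Proof.
move=> aS; apply/setP=> i; rewrite in_sd !inE.
by case: (eqVneq i a) => [->|]; first by rewrite (negPf aS).
Qed.

Lemma prod_sd (F : comRingType) (h : 'I_n -> F) A B : (forall i, h i * h i = 1) ->
  \prod_(i in sd A B) h i = \prod_(i in A) h i * \prod_(i in B) h i.
Proof.
move=> hh; rewrite !(big_mkcond (fun i => i \in _)) -big_split; apply: eq_bigr => i _.
by rewrite in_sd; case: (i \in A); case: (i \in B); rewrite /= ?mulr1 ?mul1r ?hh.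
Qed.

Lemma odd_sd A B : odd #|sd A B| = odd #|A| (+) odd #|B|.
Proof.
have hsign : (-1 : int) ^+ #|sd A B| = (-1) ^+ #|A| * (-1) ^+ #|B|.
  by rewrite -!prodr_const; apply: prod_sd => i; rewrite mulrNN mulr1.
apply: (@signr_inj int); rewrite signr_addb !signr_odd; exact: hsign.
Qed.

End SymmetricDifference.

Section CliffordAlgebra.
Variables (F : fieldType) (n : nat) (eta : 'I_n -> F).

Local Notation cl := (cl F n).
Local Notation "x ** y" := (clmul eta x y) (at level 40, left associativity).
Local Notation bsign := (bsign eta).
Local Notation sd := (@symdiff n).
Local Notation one := (clone F n).
Implicit Types (A B C D S : {set 'I_n}) (x y z : cl).

Definition scl (a : F) (x : cl) : cl := [ffun C => a * x C].
Local Notation "a *s x" := (scl a x) (at level 40).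

Lemma sclA a b x : a *s (b *s x) = (a * b) *s x.
Proof. by apply/ffunP=> C; rewrite !ffunE mulrA. Qed.
Lemma scl1 x : 1 *s x = x.
Proof. by apply/ffunP=> C; rewrite !ffunE mul1r. Qed.
Lemma scl0 x : 0 *s x = 0.
Proof. by apply/ffunP=> C; rewrite !ffunE mul0r. Qed.
Lemma sclN a x : a *s (- x) = (- a) *s x.
Proof. by apply/ffunP=> C; rewrite !ffunE mulrN mulNr. Qed.
Lemma sclDr a x y : a *s (x + y) = a *s x + a *s y.
Proof. by apply/ffunP=> C; rewrite !ffunE mulrDr. Qed.

Lemma scl_inj a x y : a != 0 -> a *s x = a *s y -> x = y.
Proof.
by move=> a0 /ffunP h; apply/ffunP=> C; move: (h C); rewrite !ffunE; exact: mulfI.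
Qed.

Lemma scl_eq0 a x : a != 0 -> a *s x = 0 -> x = 0.
Proof.
move=> a0 h; apply: (scl_inj a0); rewrite h.
by apply/ffunP=> C; rewrite !ffunE mulr0.
Qed.

Lemma scl_solve a b (p q : cl) : b != 0 -> a *s p + b *s q = 0 -> q = (- (a / b)) *s p.
Proof.
move=> b0 /ffunP h; apply/ffunP=> C; move: (h C); rewrite !ffunE => /eqP.
rewrite addr_eq0 => /eqP hC; apply: (mulfI b0).
by rewrite -[b * q C]opprK -hC; field.
Qed.

Lemma clmulE x y C : (x ** y) C = \sum_A x A * y (sd A C) * bsign A (sd A C).
Proof.
rewrite ffunE; apply: eq_bigr => A _.
rewrite (bigD1 (sd A C)) //= big1 ?addr0; first by rewrite sdK eqxx mul1r.
by move=> B /negPf nB; rewrite sd_eq nB mul0r.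
Qed.

Lemma clmulDl x y z : (x + y) ** z = x ** z + y ** z.
Proof.
apply/ffunP=> C; rewrite [RHS]ffunE !clmulE -big_split; apply: eq_bigr => A _.
by rewrite ffunE !mulrDl.
Qed.

Lemma clmulDr x y z : x ** (y + z) = x ** y + x ** z.
Proof.
apply/ffunP=> C; rewrite [RHS]ffunE !clmulE -big_split; apply: eq_bigr => A _.
by rewrite ffunE !mulrDr !mulrDl.
Qed.

Lemma clmulZl a x y : (a *s x) ** y = a *s (x ** y).
Proof.
apply/ffunP=> C; rewrite [RHS]ffunE !clmulE mulr_sumr; apply: eq_bigr => A _.
by rewrite ffunE; ring.
Qed.

Lemma clmulZr a x y : x ** (a *s y) = a *s (x ** y).
Proof.
apply/ffunP=> C; rewrite [RHS]ffunE !clmulE mulr_sumr; apply: eq_bigr => A _.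
by rewrite ffunE; ring.
Qed.

Lemma clmul0l x : 0 ** x = 0.
Proof. by apply/ffunP=> C; rewrite clmulE ffunE big1 // => A _; rewrite ffunE !mul0r. Qed.
Lemma clmul0r x : x ** 0 = 0.
Proof. by apply/ffunP=> C; rewrite clmulE ffunE big1 // => A _; rewrite ffunE mulr0 mul0r. Qed.

(* bsign A B = eps A B * metric A B: eps is the sign of the permutation
   sorting the word e_A e_B, metric the product of eta over A :&: B. *)
Definition osign (a b : 'I_n) : F := if (val b < val a)%N then -1 else 1.
Definition eps A B : F := \prod_(a in A) \prod_(b in B) osign a b.
Definition metric (X : {set 'I_n}) : F := \prod_(i in X) eta i.

Lemma inversions_count A B :
  #|[set ab : 'I_n * 'I_n | [&& ab.1 \in A, ab.2 \in B & (val ab.2 < val ab.1)%N]]|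
  = (\sum_(a in A) \sum_(b in B) (val b < val a))%N.
Proof.
rewrite -sum1dep_card big_mkcond /=.
rewrite -(pair_bigA _ (fun a b =>
  if [&& a \in A, b \in B & (val b < val a)%N] then 1%N else 0%N)) /=.
rewrite [RHS]big_mkcond; apply: eq_bigr => a _ /=.
case: (a \in A) => /=; last by rewrite big1.
rewrite [RHS]big_mkcond; apply: eq_bigr => b _ /=.
by case: (b \in B) => //=; case: ifP.
Qed.

Lemma inversions_sign A B :
  (-1) ^+ #|[set ab : 'I_n * 'I_n | [&& ab.1 \in A, ab.2 \in B & (val ab.2 < val ab.1)%N]]|
  = eps A B.
Proof.
rewrite inversions_count expr_sum; apply: eq_bigr => a _.
by rewrite expr_sum; apply: eq_bigr => b _; rewrite /osign; case: ifP.
Qed.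

Lemma bsignE A B : bsign A B = eps A B * metric (A :&: B).
Proof. by rewrite /Defs.bsign inversions_sign. Qed.

Lemma osign2 a b : osign a b * osign a b = 1.
Proof. by rewrite /osign; case: ifP => _; rewrite ?mulrNN mulr1. Qed.

Lemma eps2 A B : eps A B * eps A B = 1.
Proof.
by rewrite /eps -big_split big1 // => a _; rewrite -big_split big1 // => b _; exact: osign2.
Qed.

Lemma eps_sdl A B C : eps (sd A B) C = eps A C * eps B C.
Proof. by apply: prod_sd => a; rewrite -big_split big1 // => b _; exact: osign2. Qed.

Lemma eps_sdr A B C : eps A (sd B C) = eps A B * eps A C.
Proof.
by rewrite /eps -big_split; apply: eq_bigr => a _; apply: prod_sd => b; exact: osign2.
Qed.

Lemma metric_cocycle A B C :
  metric (A :&: B) * metric (sd A B :&: C) = metric (A :&: sd B C) * metric (B :&: C).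
Proof.
rewrite /metric !(big_mkcond (fun i => i \in _)) -!big_split; apply: eq_bigr => i _.
rewrite !(in_setI, in_sd); case: (i \in A); case: (i \in B); case: (i \in C);
  by rewrite /= ?mulr1 ?mul1r.
Qed.

(* The 2-cocycle identity behind associativity of the Clifford product. *)
Lemma bsign_cocycle A B C :
  bsign A B * bsign (sd A B) C = bsign A (sd B C) * bsign B C.
Proof.
rewrite !bsignE eps_sdl eps_sdr.
transitivity (eps A B * eps A C * eps B C * (metric (A :&: B) * metric (sd A B :&: C))).
  by ring.
by rewrite metric_cocycle; ring.
Qed.

Lemma clmulA x y z : x ** (y ** z) = (x ** y) ** z.
Proof.
apply/ffunP=> D; rewrite !clmulE.
under [LHS]eq_bigr => A _ do rewrite clmulE mulr_sumr mulr_suml.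
under [RHS]eq_bigr => E _ do rewrite clmulE !mulr_suml.
rewrite [RHS]exchange_big /=; apply: eq_bigr => A _.
rewrite [RHS](reindex_inj (@sd_inj n A)) /=; apply: eq_bigr => B _.
rewrite sdK; set C := sd B (sd A D).
have eC : sd (sd A B) D = C.
  by apply/setP=> i; rewrite !in_sd; case: (i \in A); case: (i \in B); case: (i \in D).
have eAD : sd A D = sd B C by rewrite sdK.
rewrite eC eAD.
transitivity (x A * y B * z C * (bsign A (sd B C) * bsign B C)); first by ring.
by rewrite -bsign_cocycle; ring.
Qed.

Lemma bsign0l B : bsign set0 B = 1.
Proof. by rewrite bsignE /eps big_set0 set0I /metric big_set0 mulr1. Qed.

Lemma bsign0r A : bsign A set0 = 1.
Proof. by rewrite bsignE setI0 /metric big_set0 mulr1 /eps big1 // => a _; rewrite big_set0. Qed.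

Lemma mul_blade_l A x D : (blade F A ** x) D = x (sd A D) * bsign A (sd A D).
Proof.
rewrite clmulE (bigD1 A) //= big1 ?addr0; first by rewrite ffunE eqxx mul1r.
by move=> B nB; rewrite ffunE (negPf nB) !mul0r.
Qed.

Lemma mul_blade_r A x D : (x ** blade F A) D = x (sd A D) * bsign (sd A D) A.
Proof.
rewrite clmulE (bigD1 (sd A D)) //= big1 ?addr0; first by rewrite sdKr ffunE eqxx mulr1.
move=> B nB; rewrite ffunE; suff /negPf -> : sd B D != A by rewrite mulr0 mul0r.
by apply: contraNneq nB => <-; rewrite sdKr.
Qed.

Lemma mul_blades A B : blade F A ** blade F B = bsign A B *s blade F (sd A B).
Proof.
apply/ffunP=> D; rewrite mul_blade_l !ffunE sd_eq.
by case: eqP => [->|_]; rewrite ?sdK ?mulr1 ?mulr0 ?mul0r ?mul1r.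
Qed.

Lemma clmul1x x : one ** x = x.
Proof. by apply/ffunP=> C; rewrite /clone mul_blade_l sd0 bsign0l mulr1. Qed.

Lemma clmulx1 x : x ** one = x.
Proof. by apply/ffunP=> C; rewrite /clone mul_blade_r sd0 bsign0r mulr1. Qed.

(* rho A C = +-1 is the sign with e_A e_C = rho A C * e_C e_A. *)
Definition rho A C : F := eps A C * eps C A.

Lemma bsign_swap A C : bsign A C = rho A C * bsign C A.
Proof.
rewrite !bsignE /rho setIC.
transitivity (eps A C * (eps C A * eps C A) * metric (C :&: A)); last by ring.
by rewrite eps2 mulr1.
Qed.

Lemma rho_sdl A B C : rho (sd A B) C = rho A C * rho B C.
Proof. by rewrite /rho eps_sdl eps_sdr; ring. Qed.

Lemma rho2 A C : rho A C * rho A C = 1.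
Proof.
transitivity ((eps A C * eps A C) * (eps C A * eps C A)); first by rewrite /rho; ring.
by rewrite !eps2 mulr1.
Qed.

Lemma rho_neq0 A C : rho A C != 0.
Proof. by apply: contra_eq_neq (rho2 A C) => ->; rewrite mul0r eq_sym oner_neq0. Qed.

(* e_a passes e_c with sign -1 unless a = c, where it commutes. *)
Definition flip C (a : 'I_n) : F := if a \in C then -1 else 1.

Lemma rho_formula A C : rho A C = \prod_(a in A) ((-1) ^+ #|C| * flip C a).
Proof.
rewrite /rho /eps [X in _ * X]exchange_big /= -big_split; apply: eq_bigr => a _.
have swap c : osign a c * osign c a = (-1) * (if a == c then -1 else 1).
  by rewrite /osign -val_eqE; case: ltngtP => _; rewrite ?mulrNN ?mulr1 ?mulN1r ?mul1r.
rewrite /= -big_split (eq_bigr _ (fun c _ => swap c)) big_split /= prodr_const /flip.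
congr (_ * _); case: ifP => aC.
  rewrite (bigD1 a) //= eqxx big1 ?mulr1 // => c /andP [_ ca].
  by rewrite eq_sym (negPf ca).
by rewrite big1 // => c cC; rewrite ifF //; apply: contraFF aC => /eqP ->.
Qed.

Lemma rho1 a C : rho [set a] C = (-1) ^+ #|C| * flip C a.
Proof. by rewrite rho_formula big_set1. Qed.

(* A nondegenerate form: all blades are invertible. *)
Hypothesis eta_neq0 : forall i, eta i != 0.

Lemma bsign_neq0 A B : bsign A B != 0.
Proof.
have eps_neq0 : eps A B != 0.
  by apply: contra_eq_neq (eps2 A B) => ->; rewrite mul0r eq_sym oner_neq0.
by rewrite bsignE mulf_neq0 //; apply/prodf_neq0 => i _.
Qed.

Lemma comm_blade_coef A x D :
  (blade F A ** x) D = rho A (sd A D) * (x ** blade F A) D.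
Proof. by rewrite mul_blade_l mul_blade_r bsign_swap; ring. Qed.

Lemma commute_coef A x : blade F A ** x = x ** blade F A ->
  forall C, x C != 0 -> rho A C = 1.
Proof.
move=> e C xC; move: (comm_blade_coef A x (sd A C)); rewrite e sdK => h.
have nz : (x ** blade F A) (sd A C) != 0 by rewrite mul_blade_r sdK mulf_neq0 ?bsign_neq0.
by apply/eqP; rewrite -(inj_eq (mulIf nz)) mul1r -h.
Qed.

Lemma commute_of A x : (forall C, x C != 0 -> rho A C = 1) ->
  blade F A ** x = x ** blade F A.
Proof.
move=> h; apply/ffunP=> D; rewrite comm_blade_coef.
case: (eqVneq (x (sd A D)) 0) => xz; last by rewrite h // mul1r.
by rewrite mul_blade_r xz !mul0r mulr0.
Qed.

Lemma anticommute_of A x : (forall C, x C != 0 -> rho A C = -1) ->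
  blade F A ** x = - (x ** blade F A).
Proof.
move=> h; apply/ffunP=> D; rewrite comm_blade_coef [RHS]ffunE.
case: (eqVneq (x (sd A D)) 0) => xz; last by rewrite h // mulN1r.
by rewrite mul_blade_r xz !mul0r mulr0 oppr0.
Qed.

Lemma exists_avoiding (X : {set 'I_n}) m : (m + #|X| <= n)%N ->
  exists S, #|S| = m /\ S \subset ~: X.
Proof.
move=> hm; exists [set i in take m (enum (~: X))]; split.
  rewrite cardsE; apply/eqP; move: (take_uniq m (enum_uniq (pred_of_set (~: X)))).
  move/card_uniqP ->; rewrite size_takel // -cardE cardsCs setCK card_ord; lia.
by apply/subsetP => i; rewrite inE => /mem_take; rewrite mem_enum.
Qed.

(* Characteristic not 2, so that the signs +1 and -1 differ. *)
Hypothesis two_neq0 : (2 : F) != 0.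

Lemma m1_neq1 : (-1 : F) != 1.
Proof. by apply: contra_neq two_neq0 => e; rewrite -[2]/(1 + 1) -{1}e addNr. Qed.

Lemma flip_inj C a b : flip C a = flip C b -> (a \in C) = (b \in C).
Proof.
rewrite /flip; case: (a \in C); case: (b \in C) => // /eqP;
  by rewrite ?(negPf m1_neq1) // eq_sym (negPf m1_neq1).
Qed.

Lemma rho_setT C : rho C setT = ((-1) ^+ n * -1) ^+ #|C|.
Proof.
rewrite rho_formula -[in RHS]prodr_const; apply: eq_bigr => c _.
by rewrite cardsT card_ord /flip inE.
Qed.

Lemma rho_setTl C : rho setT C = ((-1) ^+ n * -1) ^+ #|C|.
Proof. by rewrite /rho mulrC -/(rho C setT) rho_setT. Qed.

Section CommutingWithAGrade.
Variables (k : nat) (x : cl).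
Hypotheses (k_ge1 : (1 <= k)%N) (k_le : (k <= n - 1)%N).
Hypothesis x_comm : forall A, #|A| = k -> blade F A ** x = x ** blade F A.

(* Comparing e_(a+S) and e_(b+S), |S| = k - 1, shows that the support of x
   cannot separate two points: it consists of the empty and the full set. *)
Lemma comm_grade_support C : x C != 0 -> C = set0 \/ C = setT.
Proof.
move=> xC.
have same (a b : 'I_n) : a != b -> (a \in C) = (b \in C).
  move=> ab; have [S [cS sS]] := @exists_avoiding [set a; b] k.-1
    ltac:(rewrite cards2 ab; lia).
  have rho_one c : c \in [set a; b] -> rho [set c] C * rho S C = 1.
    move=> cab; have cS' : c \notin S.
      by apply: contraL cab => /(subsetP sS); rewrite inE.
    rewrite -rho_sdl -setU1_sd //; apply: commute_coef xC.
    by apply: x_comm; rewrite cardsU1 cS' cS add1n prednK.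
  have : rho [set a] C = rho [set b] C.
    by apply: (mulIf (rho_neq0 S C)); rewrite !rho_one ?set21 ?set22.
  by rewrite !rho1 => /(mulfI (negbT (signr_eq0 _ _))) /flip_inj.
have [-> | [a aC]] := set_0Vmem C; [by left | right].
apply/setP=> b; rewrite inE.
by case: (eqVneq a b) => [<- // | ab]; rewrite -(same _ _ ab).
Qed.

Lemma comm_grade_grade0n : in_grade0n x.
Proof.
move=> C /comm_grade_support [] ->; first by rewrite cards0.
by rewrite cardsT card_ord eqxx orbT.
Qed.

(* For odd k and even n, e_N anticommutes with the grade-k blades, so the
   C^n component vanishes; for odd n, C^0 (+) C^n is the center anyway. *)
Lemma comm_odd_grade_center : odd k -> in_center x.
Proof.
move=> ko; rewrite /in_center; case: ifP => no; first exact: comm_grade_grade0n.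
move=> C xC; have [-> | eC] := comm_grade_support xC; first by rewrite cards0.
have [S [cS _]] := @exists_avoiding set0 k ltac:(rewrite cards0; lia).
have := commute_coef (x_comm cS) xC; rewrite eC.
by rewrite rho_setT -signr_odd no expr0 mul1r cS -signr_odd ko expr1 => /eqP;
  rewrite (negPf m1_neq1).
Qed.

End CommutingWithAGrade.

Definition par (b : bool) (x : cl) : Prop := in_grades (fun j => odd j == b) x.
Definition ev (x : cl) : cl := [ffun A : {set 'I_n} => if odd #|A| then 0 else x A].
Definition od (x : cl) : cl := [ffun A : {set 'I_n} => if odd #|A| then x A else 0].

Lemma ev_od x : ev x + od x = x.
Proof. by apply/ffunP=> A; rewrite !ffunE; case: ifP; rewrite ?add0r ?addr0. Qed.

Lemma par_ev x : par false (ev x).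
Proof. by move=> A; rewrite ffunE; case: (odd #|A|); rewrite ?eqxx. Qed.
Lemma par_od x : par true (od x).
Proof. by move=> A; rewrite ffunE; case: (odd #|A|); rewrite ?eqxx. Qed.

Lemma par_even x : par false x -> in_even x.
Proof. by move=> h A /h; case: (odd _). Qed.
Lemma par_odd x : par true x -> in_odd x.
Proof. by move=> h A /h; case: (odd _). Qed.

Lemma grade_par k x : in_grade k x -> par (odd k) x.
Proof. by move=> h A /h /eqP ->. Qed.

Lemma par0 b : par b 0.
Proof. by move=> A; rewrite ffunE eqxx. Qed.

Lemma par_add b x y : par b x -> par b y -> par b (x + y).
Proof.
move=> hx hy A; rewrite ffunE; case: (eqVneq (x A) 0) => [-> | xA _]; last exact: hx.
by rewrite add0r; exact: hy.
Qed.

Lemma par_scl b a x : par b x -> par b (a *s x).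
Proof. by move=> hx A; rewrite ffunE mulf_eq0 negb_or => /andP [_]; exact: hx. Qed.

Lemma par_mul b c x y : par b x -> par c y -> par (b (+) c) (x ** y).
Proof.
move=> hx hy C; apply: contraR => nP; rewrite clmulE big1 // => A _.
case: (eqVneq (x A) 0) => [-> | xA]; first by rewrite !mul0r.
case: (eqVneq (y (sd A C)) 0) => [-> | yA]; first by rewrite mulr0 mul0r.
by move: nP; rewrite -{1}(sdK A C) odd_sd (eqP (hx _ xA)) (eqP (hy _ yA)) eqxx.
Qed.

Lemma par_zero b x C : par b x -> odd #|C| != b -> x C = 0.
Proof. by move=> hx; apply: contraNeq => /hx. Qed.

Lemma par_split b (u v u' v' : cl) : par b u -> par (~~ b) v -> par b u' ->
  par (~~ b) v' -> u + v = u' + v' -> u = u' /\ v = v'.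
Proof.
move=> hu hv hu' hv' /ffunP e; split; apply/ffunP=> C; move: (e C); rewrite !ffunE;
  case: (eqVneq (odd #|C|) b) => ob.
- by rewrite (par_zero hv) ?(par_zero hv') ?addr0 // ob; case: b {hu hv hu' hv' ob}.
- by rewrite (par_zero hu ob) (par_zero hu' ob).
- by rewrite (par_zero hv) ?(par_zero hv') // ob; case: b {hu hv hu' hv' ob}.
- by rewrite (par_zero hu ob) (par_zero hu' ob) !add0r.
Qed.

Lemma intertwine_odd b (T U V : cl) : par b U -> par b V -> V ** T = T ** U ->
  V ** od T = od T ** U.
Proof.
move=> hU hV e.
have := @par_split b (V ** ev T) (V ** od T) (ev T ** U) (od T ** U).
rewrite -clmulDr -clmulDl !ev_od => h; apply: (h _ _ _ _ e).2.
- by rewrite -[b]addbF; apply: par_mul => //; exact: par_ev.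
- by rewrite -addbT; apply: par_mul => //; exact: par_od.
- by rewrite -[b]addFb; apply: par_mul => //; exact: par_ev.
- by rewrite -addTb; apply: par_mul => //; exact: par_od.
Qed.

(* The ordered pairs of A split into the diagonal and two halves
   exchanged by the swap. *)
Lemma self_inversions A :
  ((\sum_(a in A) \sum_(b in A) (val b < val a)).*2 + #|A| = #|A| * #|A|)%N.
Proof.
have all_pairs : (\sum_(a in A) \sum_(b in A)
    ((val b < val a) + (val a < val b) + (a == b)) = #|A| * #|A|)%N.
  transitivity (\sum_(a in A) \sum_(b in A) 1)%N.
    apply: eq_bigr => a _; apply: eq_bigr => b _.
    by rewrite -val_eqE; case: (ltngtP (val b) (val a)).
  by under eq_bigr => a _ do rewrite sum1_card; rewrite sum_nat_const.
rewrite -all_pairs; under [RHS]eq_bigr => a _ do rewrite !big_split /=.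
rewrite !big_split /= -addnn exchange_big; congr (_ + _).
rewrite -sum1_card; apply: eq_bigr => a aA.
by rewrite (bigD1 a) //= eqxx big1 // => b /andP [_ ba]; rewrite eq_sym (negPf ba).
Qed.

(* Reversion multiplies e_A by the sign of the permutation reversing A. *)
Lemma clrevE x A : clrev x A = eps A A * x A.
Proof.
rewrite ffunE -inversions_sign inversions_count; congr (_ ^+ _ * _).
by rewrite mulnBr muln1 -(self_inversions A) addnK divn2 doubleK.
Qed.

Lemma clrev_involutive x : clrev (clrev x) = x.
Proof. by apply/ffunP=> A; rewrite !clrevE mulrA eps2 mul1r. Qed.

Lemma clrev_one : clrev one = one.
Proof.
apply/ffunP=> A; rewrite clrevE ffunE.
by case: (eqVneq A set0) => [->|_]; rewrite ?mulr0 // /eps big_set0 mul1r.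
Qed.

Lemma eps_sd_self A C : eps (sd A C) (sd A C) * rho A C = eps A A * eps C C.
Proof.
rewrite eps_sdl !eps_sdr /rho.
transitivity (eps A A * eps C C * (eps A C * eps A C) * (eps C A * eps C A)); first by ring.
by rewrite !eps2 !mulr1.
Qed.

Lemma clrev_mul x y : clrev (x ** y) = clrev y ** clrev x.
Proof.
apply/ffunP=> D; rewrite clrevE !clmulE mulr_sumr.
rewrite [RHS](reindex_inj (@sd_inj n D)) /=; apply: eq_bigr => A _.
rewrite [sd D A]sdC sdKr !clrevE bsign_swap; set C := sd A D.
have eD : eps D D * rho A C = eps A A * eps C C.
  by rewrite -eps_sd_self /C sdK.
transitivity (eps D D * rho A C * (x A * y C * bsign C A)); first by ring.
by rewrite eD; ring.
Qed.

Definition rsgn (k : nat) : F := (-1) ^+ ((k * (k - 1)) %/ 2).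

Lemma clrev_grade k x : in_grade k x -> clrev x = rsgn k *s x.
Proof.
move=> h; apply/ffunP=> A; rewrite !ffunE.
by case: (eqVneq (x A) 0) => [->|/h /eqP ->]; rewrite ?mulr0.
Qed.

Lemma rsgn_2mod4 : (n %% 4 = 2)%N -> rsgn n = -1.
Proof.
move=> h; rewrite /rsgn.
have e : n = (4 * (n %/ 4) + 2)%N by rewrite {1}(divn_eq n 4) h mulnC.
set m := (n %/ 4)%N in e.
have -> : (n * (n - 1) = 2 * ((2 * m + 1) * (4 * m + 1)))%N by rewrite e; nia.
by rewrite mulKn // -signr_odd oddM (oddD (2 * m)) (oddD (4 * m)) (oddM 2) (oddM 4) expr1.
Qed.

Lemma clrev_fixed_top x : (n %% 4 = 2)%N -> clrev x = x -> x setT = 0.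
Proof.
move=> n4 /ffunP /(_ setT); rewrite ffunE cardsT card_ord -/(rsgn n) rsgn_2mod4 //.
rewrite mulN1r => /eqP; rewrite eq_sym -addr_eq0 -mulr2n -mulr_natr mulf_eq0.
by rewrite (negPf two_neq0) orbF => /eqP.
Qed.

Local Notation eN := (blade F (setT : {set 'I_n})).
Definition sN : F := bsign setT setT.

Lemma eN_sqr : eN ** eN = sN *s one.
Proof. by rewrite mul_blades sdvv. Qed.

Lemma sN_neq0 : sN != 0.
Proof. exact: bsign_neq0. Qed.

Lemma par_eN : par (odd n) eN.
Proof.
move=> A; rewrite ffunE; case: (eqVneq A setT) => [->|]; last by rewrite eqxx.
by rewrite cardsT card_ord eqxx.
Qed.

Lemma par_one : par false one.
Proof.
move=> A; rewrite ffunE; case: (eqVneq A set0) => [->|]; last by rewrite eqxx.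
by rewrite cards0.
Qed.

Lemma eN_central : odd n -> forall x, eN ** x = x ** eN.
Proof.
move=> no x; apply: commute_of => C _.
by rewrite rho_setTl -signr_odd no expr1 mulrNN mulr1 expr1n.
Qed.

Lemma eN_comm_even : ~~ odd n -> forall x, par false x -> eN ** x = x ** eN.
Proof.
move=> no x hx; apply: commute_of => C xC.
rewrite rho_setTl -signr_odd (negPf no) expr0 mul1r.
by rewrite -signr_odd (eqP (hx _ xC)).
Qed.

Lemma eN_anticomm_odd : ~~ odd n -> forall x, par true x -> eN ** x = - (x ** eN).
Proof.
move=> no x hx; apply: anticommute_of => C xC.
rewrite rho_setTl -signr_odd (negPf no) expr0 mul1r.
by rewrite -signr_odd (eqP (hx _ xC)).
Qed.

(* span a b = a e + b e_N, the elements of C^0 (+) C^n; this is a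
   commutative subalgebra with conjugation span a b -> span a (-b). *)
Definition span (a b : F) : cl := a *s one + b *s eN.

Lemma span_mul a b c d :
  span a b ** span c d = span (a * c + b * d * sN) (a * d + b * c).
Proof.
rewrite /span !clmulDl !clmulDr !clmulZl !clmulZr clmul1x clmulx1 clmul1x eN_sqr.
by apply/ffunP=> C; rewrite !ffunE; ring.
Qed.

Lemma span_mulx a b x : span a b ** x = a *s x + b *s (eN ** x).
Proof. by rewrite /span clmulDl !clmulZl clmul1x. Qed.

Lemma mulx_span a b x : x ** span a b = a *s x + b *s (x ** eN).
Proof. by rewrite /span clmulDr !clmulZr clmulx1. Qed.

Lemma span_scalar c : span c 0 = c *s one.
Proof. by apply/ffunP=> C; rewrite !ffunE mul0r addr0. Qed.

Lemma span_grade0n a b : in_grade0n (span a b).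
Proof.
move=> C; rewrite !ffunE.
case: (eqVneq C set0) => [->|_]; first by rewrite cards0.
case: (eqVneq C setT) => [->|_]; first by rewrite cardsT card_ord eqxx orbT.
by rewrite !mulr0 addr0 eqxx.
Qed.

Lemma setT_neq0 : (0 < n)%N -> (setT : {set 'I_n}) != set0.
Proof. by move=> n0; apply/set0Pn; exists (Ordinal n0); rewrite inE. Qed.

Lemma span_set0 a b : (0 < n)%N -> span a b set0 = a.
Proof.
by move=> n0; rewrite !ffunE eqxx eq_sym (negPf (setT_neq0 n0)) mulr0 mulr1 addr0.
Qed.

Lemma grade0n_span x : (0 < n)%N -> in_grade0n x -> x = span (x set0) (x setT).
Proof.
move=> n0 hx; have nT := setT_neq0 n0; apply/ffunP=> C; rewrite !ffunE.
have [-> | C0] := eqVneq C set0; first by rewrite eq_sym (negPf nT) mulr1 mulr0 addr0.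
have [-> | CT] := eqVneq C setT; first by rewrite mulr1 mulr0 add0r.
rewrite !mulr0 addr0.
case: (eqVneq (x C) 0) => // /hx /orP [] hC; first by move: C0; rewrite -cards_eq0 hC.
by move: CT; rewrite eqEcard subsetT cardsT card_ord (eqP hC) leqnn.
Qed.

Lemma par_span_even a b : ~~ odd n -> par false (span a b).
Proof.
move=> no; apply: par_add; apply: par_scl; first exact: par_one.
by have := par_eN; rewrite (negPf no).
Qed.

Definition span_norm (a b : F) : F := a * a - b * b * sN.

Lemma span_mul_conj a b : span a b ** span a (- b) = span_norm a b *s one.
Proof. by rewrite span_mul -span_scalar /span_norm; congr span; ring. Qed.

Lemma span_conj_mul a b : span a (- b) ** span a b = span_norm a b *s one.
Proof. by rewrite span_mul -span_scalar /span_norm; congr span; ring. Qed.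

Lemma span_inverse a b (d := span_norm a b) : d != 0 ->
  span a b ** (d^-1 *s span a (- b)) = one /\ (d^-1 *s span a (- b)) ** span a b = one.
Proof.
move=> d0; rewrite clmulZr clmulZl span_mul_conj span_conj_mul sclA mulVf //.
by split; exact: scl1.
Qed.

Lemma Pset_factor (W Winv T0 T Tinv : cl) : in_center W ->
  W ** Winv = one -> Winv ** W = one -> T = W ** T0 ->
  T ** Tinv = one -> Tinv ** T = one -> in_even T0 \/ in_odd T0 -> Pset eta T.
Proof.
move=> cW hW hW' eT hT hT' hom; exists W, T0; split => //; first by exists Winv.
have eT0 : T0 = Winv ** T by rewrite eT clmulA hW' clmul1x.
exists (Tinv ** W); split; last by rewrite -clmulA -eT hT'.
by rewrite eT0 -clmulA [T ** _]clmulA hT clmul1x hW'.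
Qed.

Lemma one_center : in_center one.
Proof.
rewrite /in_center; case: ifP => _ A; rewrite ffunE;
  by case: (eqVneq A set0) => [->|]; rewrite ?cards0 ?eqxx.
Qed.

Lemma Pset_homogeneous (T Tinv : cl) : T ** Tinv = one -> Tinv ** T = one ->
  in_even T \/ in_odd T -> Pset eta T.
Proof.
move=> hT hT'.
exact: (Pset_factor one_center (clmul1x one) (clmul1x one) (esym (clmul1x T)) hT hT').
Qed.

Section PCriterion.
Variables (T Tinv : cl) (a b : F).
Hypotheses (hT : T ** Tinv = one) (hT' : Tinv ** T = one).
Hypothesis odd_part : T ** span a b = od T.

Lemma left_annihilator (y : cl) : y ** T = 0 -> y = 0.
Proof. by move=> yT; rewrite -[y]clmulx1 -hT clmulA yT clmul0l. Qed.

(* An element e + c e_N dividing T on the left is invertible: otherwise its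
   conjugate e - c e_N would annihilate T. *)
Lemma span_factor_norm c (T0 : cl) : (0 < n)%N -> T = span 1 c ** T0 ->
  span_norm 1 c != 0.
Proof.
move=> n0 eT; apply/eqP => d0.
have W'0 : span 1 (- c) = 0.
  by apply: left_annihilator; rewrite eT clmulA span_conj_mul d0 scl0 !clmul0l.
have := span_set0 1 (- c) n0; rewrite W'0 ffunE => /eqP.
by rewrite eq_sym oner_eq0.
Qed.

(* n odd: e_N is odd, so T X = T1 splits into its even and odd parts. *)
Lemma odd_part_components : odd n ->
  a *s ev T + b *s (od T ** eN) = 0 /\ b *s (ev T ** eN) + a *s od T = od T.
Proof.
move=> no; have pN : par true eN by have := par_eN; rewrite no.
apply: (@par_split false).
- apply: par_add; apply: par_scl; first exact: par_ev.
  exact: par_mul (@par_od T) pN.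
- apply: par_add; apply: par_scl; last exact: par_od.
  exact: par_mul (@par_ev T) pN.
- exact: par0.
- exact: par_od.
rewrite add0r -{3}odd_part mulx_span; set e := ev T; set o := od T.
rewrite -(ev_od T) -/e -/o clmulDl !sclDr.
by apply/ffunP=> C; rewrite !ffunE; ring.
Qed.

(* n odd: either T is homogeneous or T1 = c e_N T0, and then T = W T0 with
   W = e + c e_N central and invertible. *)
Lemma Pset_of_odd_part_odd_n : odd n -> Pset eta T.
Proof.
move=> no; have [ev_eq od_eq] := odd_part_components no.
have [b0 | b0] := eqVneq b 0.
  rewrite b0 scl0 addr0 in ev_eq; rewrite b0 scl0 add0r in od_eq.
  apply: (Pset_homogeneous hT hT'); rewrite -(ev_od T).
  have [a0 | a0] := eqVneq a 0.
    by left; rewrite -od_eq a0 scl0 addr0; apply: par_even; exact: par_ev.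
  by right; rewrite (scl_eq0 a0 ev_eq) add0r; apply: par_odd; exact: par_od.
set c := - (a / b) / sN; set W := span 1 c.
have odd_eN : od T ** eN = (- (a / b)) *s ev T := scl_solve b0 ev_eq.
have odd_eq : od T = c *s (eN ** ev T).
  have eN_inv : eN ** (sN^-1 *s eN) = one.
    by rewrite clmulZr eN_sqr sclA mulVf ?sN_neq0 // scl1.
  rewrite -[od T]clmulx1 -eN_inv clmulA odd_eN clmulZl clmulZr sclA.
  by rewrite (eN_central no).
have eT : T = W ** ev T by rewrite /W span_mulx scl1 -odd_eq ev_od.
have [hW hW'] := span_inverse (span_factor_norm (odd_gt0 no) eT).
apply: (Pset_factor _ hW hW' eT hT hT'); last by left; apply: par_even; exact: par_ev.
by rewrite /in_center no; exact: span_grade0n.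
Qed.

(* n even: X = span a b is even, so T0 X = 0 and T1 X = T1.  Either X is
   invertible and T0 = 0, or X times its conjugate vanishes, which forces
   X T = 0, hence X = 0 and T1 = T X = 0. *)
Lemma Pset_of_odd_part_even_n : ~~ odd n -> Pset eta T.
Proof.
move=> ne; set X := span a b.
have [ev_X od_X] : ev T ** X = 0 /\ od T ** X = od T.
  apply: (@par_split false) => //.
  - exact: par_mul (@par_ev T) (@par_span_even a b ne).
  - exact: par_mul (@par_od T) (@par_span_even a b ne).
  - exact: par0.
  - exact: par_od.
  by rewrite add0r -clmulDl ev_od.
apply: (Pset_homogeneous hT hT'); rewrite -(ev_od T).
have [d0 | d0] := eqVneq (span_norm a b) 0; last first.
  have [hX _] := span_inverse d0.
  rewrite -[ev T]clmulx1 -hX clmulA ev_X clmul0l add0r.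
  by right; apply: par_odd; exact: par_od.
have X_ev : X ** ev T = 0.
  by rewrite /X span_mulx (eN_comm_even ne (@par_ev T)) -mulx_span ev_X.
have X_od : X ** od T = 0.
  rewrite /X span_mulx (eN_anticomm_odd ne (@par_od T)) sclN -mulx_span.
  by rewrite -od_X -clmulA span_mul_conj d0 scl0 clmul0r.
have X0 : X = 0 by apply: left_annihilator; rewrite -(ev_od T) clmulDr X_ev X_od addr0.
by left; rewrite -odd_part -/X X0 clmul0r addr0; apply: par_even; exact: par_ev.
Qed.

End PCriterion.

Lemma Pset_of_odd_part (T Tinv : cl) : (0 < n)%N -> T ** Tinv = one -> Tinv ** T = one ->
  in_grade0n (Tinv ** od T) -> Pset eta T.
Proof.
move=> n0 hT hT' /(grade0n_span n0) eX.
have odd_part : T ** span ((Tinv ** od T) set0) ((Tinv ** od T) setT) = od T.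
  by rewrite -eX clmulA hT clmul1x.
have [no | ne] := boolP (odd n).
  exact: Pset_of_odd_part_odd_n hT hT' odd_part no.
exact: Pset_of_odd_part_even_n hT hT' odd_part ne.
Qed.

Lemma blade_grade A : in_grade #|A| (blade F A).
Proof. by move=> C; rewrite ffunE; case: (eqVneq C A) => [->|]; rewrite ?eqxx. Qed.

Section GammaK.
Variables (k : nat) (T Tinv : cl).
Hypothesis hT' : Tinv ** T = one.
Hypothesis preserves : forall U, in_grade k U -> in_grade k (T ** U ** Tinv).

Lemma conj_intertwines U : (T ** U ** Tinv) ** T = T ** U.
Proof. by rewrite -clmulA hT' clmulx1. Qed.

(* Step 1a: the parity components of V T = T U give V T1 = T1 U, so
   T^-1 T1 commutes with U. *)
Lemma odd_part_comm A : #|A| = k ->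
  blade F A ** (Tinv ** od T) = (Tinv ** od T) ** blade F A.
Proof.
move=> cA; set U := blade F A.
have hU : in_grade k U by rewrite -cA; exact: blade_grade.
have := intertwine_odd (grade_par hU) (grade_par (preserves hU)) (conj_intertwines U).
by rewrite -!clmulA => <-; rewrite !clmulA hT' clmul1x.
Qed.

(* Step 1b: reversing V T = T U gives V = T^-1~ U T~, so T~T commutes
   with U. *)
Lemma rev_norm_comm A : #|A| = k ->
  blade F A ** (clrev T ** T) = (clrev T ** T) ** blade F A.
Proof.
move=> cA; set U := blade F A.
have hU : in_grade k U by rewrite -cA; exact: blade_grade.
have hV := preserves hU; set V := T ** U ** Tinv in hV *.
have rev_inv : clrev T ** clrev Tinv = one by rewrite -clrev_mul hT' clrev_one.
have eV : V = clrev Tinv ** (U ** clrev T).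
  apply: (@scl_inj (rsgn k)); first exact: negbT (signr_eq0 _ _).
  rewrite -(clrev_grade hV) /V !clrev_mul (clrev_grade hU) clmulZl clmulZr.
  by rewrite clmulA.
by rewrite -clmulA -conj_intertwines -/V eV !clmulA rev_inv clmul1x.
Qed.

End GammaK.

Lemma rev_norm_invertible (T Tinv : cl) : T ** Tinv = one -> Tinv ** T = one ->
  clinvertible eta (clrev T ** T).
Proof.
move=> hT hT'; exists (Tinv ** clrev Tinv); split.
  by rewrite -clmulA [T ** _]clmulA hT clmul1x -clrev_mul hT' clrev_one.
by rewrite -clmulA [clrev Tinv ** _]clmulA -clrev_mul hT clrev_one clmul1x.
Qed.

Lemma grade0n_center x : in_grade0n x -> odd n \/ x setT = 0 -> in_center x.
Proof.
rewrite /in_center => hx; case: ifP => [_ _ // | _ [] // xT C xC].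
case/orP: (hx _ xC) => // /eqP cC; move: xC.
have -> : C = setT by apply/eqP; rewrite eqEcard subsetT cardsT card_ord cC leqnn.
by rewrite xT eqxx.
Qed.

Section GammaConsequences.
Variables (k : nat) (T : cl).
Hypotheses (k_ge1 : (1 <= k)%N) (k_le : (k <= n - 1)%N) (gammaT : Gamma eta k T).

Lemma Gamma_Pset : Pset eta T.
Proof.
have [Tinv [hT hT' preserves]] := gammaT.
apply: (Pset_of_odd_part _ hT hT'); first by lia.
exact: comm_grade_grade0n k_ge1 k_le (odd_part_comm hT' preserves).
Qed.

Lemma Gamma_rev_norm_grade0n : in_grade0n (clrev T ** T).
Proof.
have [Tinv [_ hT' preserves]] := gammaT.
exact: comm_grade_grade0n k_ge1 k_le (rev_norm_comm hT' preserves).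
Qed.

Lemma Gamma_rev_norm_invertible : clinvertible eta (clrev T ** T).
Proof. by have [Tinv [hT hT' _]] := gammaT; exact: rev_norm_invertible hT hT'. Qed.

Lemma Gamma_Q'set : Q'set eta T.
Proof.
split; first exact: Gamma_Pset.
by split; [exact: Gamma_rev_norm_grade0n | exact: Gamma_rev_norm_invertible].
Qed.

Lemma Gamma_Qset_odd : odd k -> Qset eta T.
Proof.
move=> ko; have [Tinv [_ hT' preserves]] := gammaT.
split; first exact: Gamma_Pset.
split; last exact: Gamma_rev_norm_invertible.
exact: comm_odd_grade_center k_ge1 k_le (rev_norm_comm hT' preserves) ko.
Qed.

(* Step 4: for n = 1, 3 mod 4 the center is C^0 (+) C^n; for n = 2 mod 4
   the C^n component of the reversion-invariant T~T vanishes. *)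
Lemma Gamma_Qset_not0mod4 : (n %% 4 != 0)%N -> Qset eta T.
Proof.
move=> n4; split; first exact: Gamma_Pset.
split; last exact: Gamma_rev_norm_invertible.
apply: grade0n_center; first exact: Gamma_rev_norm_grade0n.
have [no | ne] := boolP (odd n); [by left | right].
by apply: clrev_fixed_top; [lia | rewrite clrev_mul clrev_involutive].
Qed.

End GammaConsequences.

Lemma theorem_claim_general : theorem_claim eta.
Proof.
move=> n2; split.
- by move=> n4 k /andP [k1 kn] T hT; exact: Gamma_Qset_not0mod4 k1 kn hT n4.
- move=> n4; split.
  + by move=> k ko /andP [k1 kn] T hT; exact: Gamma_Qset_odd k1 kn hT ko.
  + by move=> k _ /andP [k2 kn] T hT; apply: Gamma_Q'set hT; lia.
- by move=> k /andP [k1 kn] T hT; exact: Gamma_Pset k1 kn hT.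
Qed.

End CliffordAlgebra.

Theorem mainTheorem12 :
  (forall (R : realType) (p q : nat), theorem_claim (@eta_pq R p q))
  /\ (forall (R : realType) (n : nat), theorem_claim (@eta_one (complex R) n)).
Proof.
split=> [R p q | R n]; apply: theorem_claim_general; rewrite ?pnatr_eq0 //.
- by move=> i; rewrite /eta_pq; case: ifP => _; rewrite ?oppr_eq0 oner_eq0.
- by move=> i; rewrite /eta_one oner_eq0.
Qed.
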